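(* Let $M\equiv\lambda\,\mathit{argClass}.\,\mathbf{Y}(\lambda\,\mathit{myClass}\,\lambda\,\mathit{state}.\,(\mathit{argClass}\;\mathit{state})\oplus R)$ be a mixin and let $\sigma\in\mathbb{T}$, $\rho_1,\rho_2\in\mathbb{T}_R$ be types not containing $+$ (and whose translations are defined) with $\mathit{lbl}(\rho_2)=\mathit{lbl}(R)$, such that for all $\rho\in\mathbb{T}_R$, $\vdash M:(\sigma\to\rho\cap\rho_1)\to(\sigma\to\rho+\rho_2)$. Define $\tau_M\equiv(([\![\sigma]\!]\to[\![\rho_1]\!])\to([\![\sigma]\!]\to[\![\rho_2]\!]))\cap\bigcap_{l\in\mathcal{L}\setminus\mathit{lbl}(R)}(([\![\sigma]\!]\to\langle\!\langle l(\alpha_l)\rangle\!\rangle)\to([\![\sigma]\!]\to\langle\!\langle l(\alpha_l)\rangle\!\rangle))$ with distinct type variables $\alpha_l$. Then for any substitution $S$ and any type $\tau\in\mathbb{T}$ such that $[\![\tau]\!]=S(\tau_M)$, we have $\vdash M:\tau$.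
   Context: \textbf{Terms.} $\Lambda_R\ni M,N ::= x\mid\lambda x.M\mid MN\mid M.l\mid R\mid M\oplus R$, records $R ::= \langle l_i=M_i\mid i\in I\rangle$, $\mathit{lbl}(\langle l_i=M_i\mid i\in I\rangle)=\{l_i\mid i\in I\}$. $\mathbf{Y}=\lambda f.(\lambda x.f(xx))(\lambda x.f(xx))$. A mixin is a closed term of the displayed form. \textbf{Types.} $\mathbb{T}\ni\sigma ::= a\mid\omega\mid\sigma_1\to\sigma_2\mid\sigma_1\cap\sigma_2\mid\rho$, $\mathbb{T}_R\ni\rho ::= \langle\rangle\mid\langle l:\sigma\rangle\mid\rho_1+\rho_2\mid\rho_1\cap\rho_2$. Subtyping $\le$: least preorder with $\sigma\le\omega$; $\omega\le\omega\to\omega$; $\sigma\cap\tau\le\sigma,\tau$; $\sigma\le\tau_1,\sigma\le\tau_2\Rightarrow\sigma\le\tau_1\cap\tau_2$; $(\sigma\to\tau_1)\cap(\sigma\to\tau_2)\le\sigma\to\tau_1\cap\tau_2$; $\sigma_2\le\sigma_1,\tau_1\le\tau_2\Rightarrow\sigma_1\to\tau_1\le\sigma_2\to\tau_2$; $\langle l:\sigma\rangle\le\langle\rangle$; $\langle l:\sigma\rangle\cap\langle l:\tau\rangle\le\langle l:\sigma\cap\tau\rangle$; $\sigma\le\tau\Rightarrow\langle l:\sigma\rangle\le\langle l:\tau\rangle$; $\rho+\langle\rangle=\langle\rangle+\rho=\rho$; $(\rho_1+\rho_2)+\rho_3=\rho_1+(\rho_2+\rho_3)$; $(\rho_1\cap\rho_2)+\rho_3=(\rho_1+\rho_3)\cap(\rho_2+\rho_3)$;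 $\langle l:\sigma\rangle+(\langle l:\tau\rangle\cap\rho)=\langle l:\tau\rangle\cap\rho$; $\langle l:\sigma\rangle+(\langle l':\tau\rangle\cap\rho)=\langle l':\tau\rangle\cap(\langle l:\sigma\rangle+\rho)$ if $l\neq l'$; $\rho_1\le\rho_2\Rightarrow\rho_1+\rho\le\rho_2+\rho$; $\rho_1=\rho_2\Rightarrow\rho+\rho_1=\rho+\rho_2$ ($=$ is $\le$ in both directions). $\mathit{lbl}(\langle\rangle)=\emptyset$, $\mathit{lbl}(\langle l:\sigma\rangle)=\{l\}$, $\mathit{lbl}(\rho_1\cap\rho_2)=\mathit{lbl}(\rho_1+\rho_2)=\mathit{lbl}(\rho_1)\cup\mathit{lbl}(\rho_2)$. \textbf{Type assignment} $\Gamma\vdash M:\sigma$ ($\vdash$ with empty basis): variable axiom; $\to$-intro/elim; $\cap$-intro; $\Gamma\vdash M:\omega$; subsumption along $\le$; $\Gamma\vdash\langle l_i=M_i\mid i\in I\rangle:\langle\rangle$; from $\Gamma\vdash M_k:\sigma$, $k\in I$ infer $\Gamma\vdash\langle l_i=M_i\mid i\in I\rangle:\langle l_k:\sigma\rangle$; from $\Gamma\vdash M:\langle l:\sigma\rangle$ infer $\Gamma\vdash M.l:\sigma$; from $\Gamma\vdash M:\rho_1$, $\Gamma\vdash R:\rho_2$, $\mathit{lbl}(R)=\mathit{lbl}(\rho_2)$ infer $\Gamma\vdash M\oplus R:\rho_1+\rho_2$. \textbf{Target types and translation.} $\mathbb{T}_C\ni\tau ::= a\mid\alpha\mid\omega\mid\tau_1\to\tau_2\mid\tau_1\cap\tau_2\mid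 c(\tau)$ ($\alpha$ type variables, $c$ unary constructors), with subtyping given by the arrow/intersection axioms above plus $\tau_1\le\tau_2\Rightarrow c(\tau_1)\le c(\tau_2)$ and $c(\tau_1)\cap c(\tau_2)\le c(\tau_1\cap\tau_2)$; $=$ denotes equivalence. Substitutions map type variables to $\mathbb{T}_C$-types. $\mathcal{L}$ is a fixed finite set of labels; constructors $\langle\!\langle\cdot\rangle\!\rangle$ and $l(\cdot)$ for $l\in\mathcal{L}$. The partial translation $[\![\cdot]\!]:\mathbb{T}\to\mathbb{T}_C$: $[\![\omega]\!]=\omega$, $[\![a]\!]=a$, $[\![\sigma\to\tau]\!]=[\![\sigma]\!]\to[\![\tau]\!]$, $[\![\sigma\cap\tau]\!]=[\![\sigma]\!]\cap[\![\tau]\!]$, $[\![\langle l:\tau\rangle]\!]=\langle\!\langle l([\![\tau]\!])\rangle\!\rangle$, $[\![\langle\rangle]\!]=\langle\!\langle\omega\rangle\!\rangle$; undefined on types containing $+$. *)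

From Stdlib Require List.
From mathcomp Require Import all_boot.

Set Implicit Arguments.
Unset Strict Implicit.
Unset Printing Implicit Defensive.

Section Calculus.
Variable Lab : eqType.

Inductive term : Type :=
| Var (x : nat)
| Lam (x : nat) (M : term)
| App (M N : term)
| Sel (M : term) (l : Lab)
| Rec (R : seq (Lab * term))
| Ext (M : term) (R : seq (Lab * term)).     (* M (+) R *)

Definition rlbl (R : seq (Lab * term)) : seq Lab := map fst R.

Inductive free_in (x : nat) : term -> Prop :=
| fi_var : free_in x (Var x)
| fi_lam y M : y <> x -> free_in x M -> free_in x (Lam y M)
| fi_app1 M N : free_in x M -> free_in x (App M N)
| fi_app2 M N : free_in x N -> free_in x (App M N)
| fi_sel M l : free_in x M -> free_in x (Sel M l)
| fi_rec l N R : List.In (l, N) R -> free_in x N -> free_in x (Rec R)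
| fi_ext1 M R : free_in x M -> free_in x (Ext M R)
| fi_ext2 M l N R : List.In (l, N) R -> free_in x N -> free_in x (Ext M R).

Definition term_closed (M : term) : Prop := forall x, ~ free_in x M.

(* Y = \f.(\x.f(xx))(\x.f(xx)) with f := 0, x := 1 *)
Definition Ycomb : term :=
  Lam 0 (App (Lam 1 (App (Var 0) (App (Var 1) (Var 1))))
             (Lam 1 (App (Var 0) (App (Var 1) (Var 1))))).

Definition mixinM (argClass myClass state : nat) (R : seq (Lab * term)) : term :=
  Lam argClass (App Ycomb
    (Lam myClass (Lam state (Ext (App (Var argClass) (Var state)) R)))).

(* ---------- Types T and record types T_R ----------
   One syntax; T_R is carved out by [wfr], T by [wf]
   (intersection is shared between T and T_R). *)
Inductive ty : Type :=
| TAtom (a : nat)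
| TOmega
| TArr (s t : ty)
| TInt (s t : ty)
| TREmpty
| TRField (l : Lab) (s : ty)
| TRPlus (r1 r2 : ty).

Fixpoint wf (t : ty) : bool :=
  match t with
  | TAtom _ | TOmega | TREmpty => true
  | TArr a b | TInt a b => wf a && wf b
  | TRField _ s => wf s
  | TRPlus a b => wfr a && wfr b
  end
with wfr (t : ty) : bool :=
  match t with
  | TREmpty => true
  | TRField _ s => wf s
  | TRPlus a b | TInt a b => wfr a && wfr b
  | _ => false
  end.

Fixpoint lblt (t : ty) : seq Lab :=
  match t with
  | TRField l _ => [:: l]
  | TRPlus a b | TInt a b => lblt a ++ lblt b
  | _ => [::]
  end.

Inductive sub : ty -> ty -> Prop :=
| s_refl s : wf s -> sub s s
| s_trans s t u : sub s t -> sub t u -> sub s u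
| s_omega s : wf s -> sub s TOmega
| s_om_arr : sub TOmega (TArr TOmega TOmega)
| s_int_l s t : wf s -> wf t -> sub (TInt s t) s
| s_int_r s t : wf s -> wf t -> sub (TInt s t) t
| s_glb s t1 t2 : sub s t1 -> sub s t2 -> sub s (TInt t1 t2)
| s_arr_int s t1 t2 : wf s -> wf t1 -> wf t2 ->
    sub (TInt (TArr s t1) (TArr s t2)) (TArr s (TInt t1 t2))
| s_arr s1 s2 t1 t2 : sub s2 s1 -> sub t1 t2 -> sub (TArr s1 t1) (TArr s2 t2)
| s_field_empty l s : wf s -> sub (TRField l s) TREmpty
| s_field_int l s t : wf s -> wf t ->
    sub (TInt (TRField l s) (TRField l t)) (TRField l (TInt s t))
| s_field_mono l s t : sub s t -> sub (TRField l s) (TRField l t)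
| s_plus_empty_r1 r : wfr r -> sub (TRPlus r TREmpty) r
| s_plus_empty_r2 r : wfr r -> sub r (TRPlus r TREmpty)
| s_plus_empty_l1 r : wfr r -> sub (TRPlus TREmpty r) r
| s_plus_empty_l2 r : wfr r -> sub r (TRPlus TREmpty r)
| s_assoc1 r1 r2 r3 : wfr r1 -> wfr r2 -> wfr r3 ->
    sub (TRPlus (TRPlus r1 r2) r3) (TRPlus r1 (TRPlus r2 r3))
| s_assoc2 r1 r2 r3 : wfr r1 -> wfr r2 -> wfr r3 ->
    sub (TRPlus r1 (TRPlus r2 r3)) (TRPlus (TRPlus r1 r2) r3)
| s_distr1 r1 r2 r3 : wfr r1 -> wfr r2 -> wfr r3 ->
    sub (TRPlus (TInt r1 r2) r3) (TInt (TRPlus r1 r3) (TRPlus r2 r3))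
| s_distr2 r1 r2 r3 : wfr r1 -> wfr r2 -> wfr r3 ->
    sub (TInt (TRPlus r1 r3) (TRPlus r2 r3)) (TRPlus (TInt r1 r2) r3)
| s_over1 l s t r : wf s -> wf t -> wfr r ->
    sub (TRPlus (TRField l s) (TInt (TRField l t) r)) (TInt (TRField l t) r)
| s_over2 l s t r : wf s -> wf t -> wfr r ->
    sub (TInt (TRField l t) r) (TRPlus (TRField l s) (TInt (TRField l t) r))
| s_shift1 l l' s t r : l <> l' -> wf s -> wf t -> wfr r ->
    sub (TRPlus (TRField l s) (TInt (TRField l' t) r))
        (TInt (TRField l' t) (TRPlus (TRField l s) r))
| s_shift2 l l' s t r : l <> l' -> wf s -> wf t -> wfr r ->
    sub (TInt (TRField l' t) (TRPlus (TRField l s) r))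
        (TRPlus (TRField l s) (TInt (TRField l' t) r))
| s_plus_mono r1 r2 r : wfr r1 -> wfr r2 -> wfr r -> sub r1 r2 ->
    sub (TRPlus r1 r) (TRPlus r2 r)
| s_plus_cong r1 r2 r : wfr r1 -> wfr r2 -> wfr r -> sub r1 r2 -> sub r2 r1 ->
    sub (TRPlus r r1) (TRPlus r r2).

Definition basis := nat -> option ty.
Definition empty_basis : basis := fun _ => None.
Definition upd (G : basis) (x : nat) (s : ty) : basis :=
  fun y => if y == x then Some s else G y.

Inductive typ : basis -> term -> ty -> Prop :=
| t_var G x s : G x = Some s -> typ G (Var x) s
| t_lam G x M s t : wf s -> typ (upd G x s) M t -> typ G (Lam x M) (TArr s t)
| t_app G M N s t : typ G M (TArr s t) -> typ G N s -> typ G (App M N) t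
| t_int G M s t : typ G M s -> typ G M t -> typ G M (TInt s t)
| t_omega G M : typ G M TOmega
| t_sub G M s t : typ G M s -> sub s t -> typ G M t
| t_rec_empty G R : typ G (Rec R) TREmpty
| t_rec_field G R l Mk s : List.In (l, Mk) R -> typ G Mk s -> typ G (Rec R) (TRField l s)
| t_sel G M l s : typ G M (TRField l s) -> typ G (Sel M l) s
| t_ext G M R r1 r2 : wfr r1 -> wfr r2 -> typ G M r1 -> typ G (Rec R) r2 ->
    (forall l, (l \in rlbl R) = (l \in lblt r2)) ->
    typ G (Ext M R) (TRPlus r1 r2).

Inductive ctor : Type := CRecord | CLabel (l : Lab).   (* << . >> and l(.) *)

Inductive cty : Type :=
| CAtom (a : nat)
| CVar (alpha : nat)
| COmega
| CArr (s t : cty)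
| CInt (s t : cty)
| CCon (c : ctor) (t : cty).

Inductive csub : cty -> cty -> Prop :=
| c_refl s : csub s s
| c_trans s t u : csub s t -> csub t u -> csub s u
| c_omega s : csub s COmega
| c_om_arr : csub COmega (CArr COmega COmega)
| c_int_l s t : csub (CInt s t) s
| c_int_r s t : csub (CInt s t) t
| c_glb s t1 t2 : csub s t1 -> csub s t2 -> csub s (CInt t1 t2)
| c_arr_int s t1 t2 : csub (CInt (CArr s t1) (CArr s t2)) (CArr s (CInt t1 t2))
| c_arr s1 s2 t1 t2 : csub s2 s1 -> csub t1 t2 -> csub (CArr s1 t1) (CArr s2 t2)
| c_con_mono c t1 t2 : csub t1 t2 -> csub (CCon c t1) (CCon c t2)
| c_con_int c t1 t2 : csub (CInt (CCon c t1) (CCon c t2)) (CCon c (CInt t1 t2)).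

Definition ceq (s t : cty) : Prop := csub s t /\ csub t s.

Fixpoint csubst (S : nat -> cty) (t : cty) : cty :=
  match t with
  | CVar a => S a
  | CArr a b => CArr (csubst S a) (csubst S b)
  | CInt a b => CInt (csubst S a) (csubst S b)
  | CCon c a => CCon c (csubst S a)
  | CAtom a => CAtom a
  | COmega => COmega
  end.

Fixpoint tr (L : seq Lab) (t : ty) : option cty :=
  match t with
  | TOmega => Some COmega
  | TAtom a => Some (CAtom a)
  | TArr a b =>
      match tr L a, tr L b with Some u, Some v => Some (CArr u v) | _, _ => None end
  | TInt a b =>
      match tr L a, tr L b with Some u, Some v => Some (CInt u v) | _, _ => None end
  | TRField l a =>
      if l \in L then
        match tr L a with Some u => Some (CCon CRecord (CCon (CLabel l) u)) | None => None end
      else None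
  | TREmpty => Some (CCon CRecord COmega)
  | TRPlus _ _ => None
  end.

Definition lab_var (alpha : Lab -> nat) (l : Lab) : cty :=
  CCon CRecord (CCon (CLabel l) (CVar (alpha l))).

Definition tauM (L : seq Lab) (R : seq (Lab * term)) (alpha : Lab -> nat)
  (s r1 r2 : cty) : cty :=
  foldr (fun l acc =>
           CInt acc (CArr (CArr s (lab_var alpha l)) (CArr s (lab_var alpha l))))
        (CArr (CArr s r1) (CArr s r2))
        [seq l <- L | l \notin rlbl R].

End Calculus.

(* The translation has a left inverse [untr] from target types back to types,
   sending type variables to omega, and [untr] is monotone for subtyping.
   Hence tau = untr [[tau]] <= untr (S tau_M), which is the intersection of
   (sigma -> rho1) -> (sigma -> rho2), an instance of the hypothesis at
   rho = <>, and of (sigma -> <l : X>) -> (sigma -> <l : X>) for the labels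
   l outside lbl(R), with X := untr (S alpha_l).  M has the latter type for
   every X: extending by R leaves the field l untouched, and Y f can be typed
   by feeding omega to f. *)
From mathcomp Require Import all_boot.
From Stdlib Require List.

Set Implicit Arguments.
Unset Strict Implicit.

Section Untranslation.
Variable Lab : eqType.

Lemma wfr_wf (r : ty Lab) : wfr r -> wf r.
Proof.
by elim: r => //= a IHa b IHb /andP [Ha Hb]; rewrite IHa ?IHb.
Qed.

Lemma sub_rempty (r : ty Lab) : wfr r -> sub r (TREmpty Lab).
Proof.
elim: r => //= [a _ b IHb /andP [Ha Hb]|_|l a Ha|a IHa b IHb /andP [Ha Hb]].
- exact: s_trans (s_int_r (wfr_wf Ha) (wfr_wf Hb)) (IHb Hb).
- exact: s_refl.
- exact: s_field_empty.
- apply: s_trans (s_plus_mono (r2 := TREmpty Lab) Ha _ Hb (IHa Ha)) _ => //.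
  exact: s_trans (s_plus_empty_l1 Hb) (IHb Hb).
Qed.

(* [untr_rec u] reads [u] as the argument of the record constructor <<.>>. *)
Fixpoint untr (t : cty Lab) : ty Lab :=
  match t with
  | CAtom a => TAtom Lab a
  | CArr a b => TArr (untr a) (untr b)
  | CInt a b => TInt (untr a) (untr b)
  | CCon CRecord u => untr_rec u
  | CVar _ | COmega | CCon (CLabel _) _ => TOmega Lab
  end
with untr_rec (t : cty Lab) : ty Lab :=
  match t with
  | CInt a b => TInt (untr_rec a) (untr_rec b)
  | CCon (CLabel l) u => TRField l (untr u)
  | _ => TREmpty Lab
  end.

Lemma untr_wf (t : cty Lab) : wf (untr t) /\ wfr (untr_rec t).
Proof.
elim: t => //= [a [Ha _] b [Hb _]|a [Ha Ha'] b [Hb Hb']|[|l] u [Hu Hu']] //.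
- by rewrite Ha Hb.
- by rewrite Ha Hb Ha' Hb'.
- by split; first exact: wfr_wf.
Qed.

Lemma untr_mono (x y : cty Lab) : csub x y ->
  sub (untr x) (untr y) /\ sub (untr_rec x) (untr_rec y).
Proof.
have W t : wf (untr t) by case: (untr_wf t).
have Wr t : wfr (untr_rec t) by case: (untr_wf t).
elim=> {x y}.
- by move=> x; split; apply: s_refl; rewrite ?W ?wfr_wf.
- by move=> x y z _ [H1 H2] _ [H3 H4]; split; apply: s_trans; eauto.
- by move=> x; split; [apply: s_omega | apply: sub_rempty].
- by split; [apply: s_om_arr | apply: s_refl].
- by move=> a b; split; apply: s_int_l; rewrite ?W ?wfr_wf.
- by move=> a b; split; apply: s_int_r; rewrite ?W ?wfr_wf.
- by move=> a b c _ [H1 H2] _ [H3 H4]; split; apply: s_glb.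
- by move=> a b c; split; [apply: s_arr_int | apply: s_int_l].
- by move=> a1 a2 b1 b2 _ [H1 _] _ [H2 _]; split; [apply: s_arr | apply: s_refl].
- move=> [|l] a b _ [H1 H2]; split => //=; try exact: s_refl.
  exact: s_field_mono.
- move=> [|l] a b; split => /=; try exact: s_int_l.
  + by apply: s_refl; rewrite /= !wfr_wf.
  + exact: s_field_int.
Qed.

Lemma untr_tr (L : seq Lab) (x : ty Lab) (u : cty Lab) :
  tr L x = Some u -> untr u = x.
Proof.
elim: x u => /= [a u [<-]|u [<-]|a IHa b IHb u|a IHa b IHb u|u [<-]|l a IHa u|]
  //.
1,2: case Ea: (tr L a) => [ua|] //; case Eb: (tr L b) => [ub|] //.
1,2: by case=> <- /=; rewrite (IHa _ Ea) (IHb _ Eb).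
case: (l \in L) => //; case Ea: (tr L a) => [ua|] //.
by case=> <- /=; rewrite (IHa _ Ea).
Qed.

Lemma csubst_tr (L : seq Lab) (S : nat -> cty Lab) (x : ty Lab) (u : cty Lab) :
  tr L x = Some u -> csubst S u = u.
Proof.
elim: x u => /= [a u [<-]|u [<-]|a IHa b IHb u|a IHa b IHb u|u [<-]|l a IHa u|]
  //.
1,2: case Ea: (tr L a) => [ua|] //; case Eb: (tr L b) => [ub|] //.
1,2: by case=> <- /=; rewrite (IHa _ Ea) (IHb _ Eb).
case: (l \in L) => //; case Ea: (tr L a) => [ua|] //.
by case=> <- /=; rewrite (IHa _ Ea).
Qed.

End Untranslation.

Section MixinTyping.
Variable Lab : eqType.
Implicit Types (G : basis Lab) (R : seq (Lab * term Lab)).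

Definition label_rty R : ty Lab :=
  foldr (fun p acc => TInt (TRField p.1 (TOmega Lab)) acc) (TREmpty Lab) R.

Lemma wfr_label_rty R : wfr (label_rty R).
Proof. by elim: R => //= p R ->. Qed.

Lemma lblt_label_rty R : lblt (label_rty R) = rlbl R.
Proof. by elim: R => //= p R ->. Qed.

Lemma typ_label_rty G R R' :
  (forall p, List.In p R' -> List.In p R) -> typ G (Rec R) (label_rty R').
Proof.
elim: R' => /= [|[l N] R' IH] sub_R; first exact: t_rec_empty.
apply: t_int; last by apply: IH => p Hp; apply: sub_R; right.
by apply: (@t_rec_field _ _ _ _ N); [apply: sub_R; left | apply: t_omega].
Qed.

Lemma sub_plus_label_rty (l : Lab) X R : wf X -> l \notin rlbl R ->
  sub (TRPlus (TRField l X) (label_rty R)) (TRField l X).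
Proof.
move=> wfX; elim: R => /= [|[l' N] R IH]; first by move=> _; apply: s_plus_empty_r1.
rewrite inE negb_or => /andP [/eqP neq_l' notin_R].
apply: s_trans (s_shift1 neq_l' wfX _ (wfr_label_rty R)) _ => //.
by apply: s_trans (s_int_r _ _) (IH notin_R); rewrite //= wfX wfr_label_rty.
Qed.

Lemma typ_Ycomb_const G A :
  wf A -> typ G (Ycomb Lab) (TArr (TArr (TOmega Lab) A) A).
Proof.
move=> wfA; apply: t_lam => //.
have self_app : typ (upd G 0 (TArr (TOmega Lab) A))
    (Lam 1 (App (Var Lab 0) (App (Var Lab 1) (Var Lab 1)))) (TArr (TOmega Lab) A).
  apply: t_lam => //; apply: (@t_app _ _ _ _ (TOmega Lab)); last exact: t_omega.
  exact: t_var.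
by apply: t_app self_app _; apply: t_omega.
Qed.

Definition frame_ty (sigma : ty Lab) (l : Lab) (X : ty Lab) : ty Lab :=
  TArr (TArr sigma (TRField l X)) (TArr sigma (TRField l X)).

Lemma typ_mixin_frame G (argClass myClass state : nat) R sigma l X :
  argClass <> myClass -> argClass <> state ->
  wf sigma -> wf X -> l \notin rlbl R ->
  typ G (mixinM argClass myClass state R) (frame_ty sigma l X).
Proof.
move=> /eqP neq_am /eqP neq_as wf_sigma wfX notin_R.
have wfA : wf (TArr sigma (TRField l X)) by rewrite /= wf_sigma wfX.
apply: t_lam => //; apply: t_app (typ_Ycomb_const _ wfA) _.
apply: t_lam => //; apply: t_lam => //.
apply: t_sub (sub_plus_label_rty wfX notin_R).
apply: t_ext => //; first exact: wfr_label_rty.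
- apply: (@t_app _ _ _ _ sigma); apply: t_var;
    by rewrite /upd ?eqxx ?(negbTE neq_am) ?(negbTE neq_as).
- exact: typ_label_rty.
- by move=> l'; rewrite lblt_label_rty.
Qed.

End MixinTyping.

Lemma typ_foldr_int (Lab : eqType) (G : basis Lab) (M : term Lab)
    (F : Lab -> ty Lab) (base : ty Lab) (ls : seq Lab) :
  typ G M base -> {in ls, forall l, typ G M (F l)} ->
  typ G M (foldr (fun l acc => TInt acc (F l)) base ls).
Proof.
move=> typ_base; elim: ls => //= l ls IH typ_F.
apply: t_int; last by apply: typ_F; rewrite inE eqxx.
by apply: IH => l' in_ls; apply: typ_F; rewrite inE in_ls orbT.
Qed.

Lemma untr_csubst_tauM (Lab : eqType) (L : seq Lab) (R : seq (Lab * term Lab))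
    (alpha : Lab -> nat) (S : nat -> cty Lab) (sigma rho1 rho2 : ty Lab)
    (s r1 r2 : cty Lab) :
  tr L sigma = Some s -> tr L rho1 = Some r1 -> tr L rho2 = Some r2 ->
  untr (csubst S (tauM L R alpha s r1 r2)) =
  foldr (fun l acc => TInt acc (frame_ty sigma l (untr (S (alpha l)))))
        (TArr (TArr sigma rho1) (TArr sigma rho2)) [seq l <- L | l \notin rlbl R].
Proof.
move=> Ts Tr1 Tr2; rewrite /tauM; elim: [seq l <- L | _] => /= [|l ls ->].
- by rewrite !(csubst_tr S Ts, csubst_tr S Tr1, csubst_tr S Tr2)
    (untr_tr Ts) (untr_tr Tr1) (untr_tr Tr2).
- by rewrite (csubst_tr S Ts) (untr_tr Ts).
Qed.

Theorem lemma5p2 (Lab : eqType) (L : seq Lab) (alpha : Lab -> nat)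
  (argClass myClass state : nat) (R : seq (Lab * term Lab))
  (sigma rho1 rho2 : ty Lab) (s r1 r2 : cty Lab)
  (S : nat -> cty Lab) (tau : ty Lab) (t : cty Lab) :
  {in L &, injective alpha} ->
  argClass <> myClass -> argClass <> state -> myClass <> state ->
  uniq (rlbl R) ->
  term_closed (mixinM argClass myClass state R) ->
  wf sigma -> wfr rho1 -> wfr rho2 ->
  tr L sigma = Some s -> tr L rho1 = Some r1 -> tr L rho2 = Some r2 ->
  (forall l, (l \in lblt rho2) = (l \in rlbl R)) ->
  (forall rho : ty Lab, wfr rho ->
     typ (@empty_basis Lab) (mixinM argClass myClass state R)
       (TArr (TArr sigma (TInt rho rho1)) (TArr sigma (TRPlus rho rho2)))) ->
  wf tau -> tr L tau = Some t ->
  ceq t (csubst S (tauM L R alpha s r1 r2)) ->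
  typ (@empty_basis Lab) (mixinM argClass myClass state R) tau.
Proof.
move=> _ neq_am neq_as _ _ _ wf_sigma wfr_rho1 wfr_rho2 Ts Tr1 Tr2 _ typ_M _ Ttau
  [_ le_t].
have typ_base : typ (@empty_basis Lab) (mixinM argClass myClass state R)
    (TArr (TArr sigma rho1) (TArr sigma rho2)).
  apply: t_sub (typ_M (TREmpty Lab) isT) _; apply: s_arr; apply: s_arr.
  - exact: s_refl.
  - by apply: s_glb; [apply: sub_rempty | apply: s_refl; rewrite wfr_wf].
  - exact: s_refl.
  - exact: s_plus_empty_l1.
rewrite -(untr_tr Ttau); apply: t_sub (proj1 (untr_mono le_t)).
rewrite (untr_csubst_tauM R alpha S Ts Tr1 Tr2).
apply: typ_foldr_int typ_base _ => l; rewrite mem_filter => /andP [notin_R _].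
by apply: typ_mixin_frame => //; case: (untr_wf (S (alpha l))).
Qed.
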